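(* Let $\mathbb{K}$ be a field, $R=\mathbb{K}\langle x,y\rangle/(xy-1)$, $I=\langle 1-yx\rangle$ the socle of $R$, and $S_n=Rf_n$ with $f_n=y^{n-1}x^{n-1}-y^nx^n$ for $n\ge1$. If $H$ is a left ideal of $R$, then either $H$ is semisimple (and so contained in $I$), or there is a unique monic polynomial $p(x)\in H\cap\mathbb{K}[x]$ of minimal degree (among nonzero polynomials in $x$ lying in $H$), and $H=\Sigma(H)\oplus Rp(x)$ for a uniquely determined left submodule $\Sigma(H)\subseteq S_1\oplus\cdots\oplus S_{\deg(p)}$.
   Context: $I=\bigoplus_{n\ge1}S_n$ as left modules, each $S_n$ being simple and isomorphic to $S_1$. *)

(* The Jacobson algebra R = K<x,y>/(xy-1) is modelled on its
   K-basis { y^i x^j : i, j >= 0 }: an element sum_{i,j} c_ij y^i x^j is stored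
   as the bivariate polynomial in {poly {poly K}} whose coefficient of
   'X^i (outer, the y-exponent) is the polynomial sum_j c_ij 'X^j (inner,
   the x-exponent). Addition is that of {poly {poly K}}; multiplication is
   jmul, determined by x^b y^c = x^(b-c) if b >= c, y^(c-b) otherwise, i.e.
   (y^a x^b)(y^c x^d) = y^(a + (c-b)_+) x^(d + (b-c)_+). *)
From HB Require Import structures.
From mathcomp Require Import all_boot all_order all_algebra.
Set Implicit Arguments. Unset Strict Implicit. Unset Printing Implicit Defensive.
Import Order.TTheory GRing.Theory Num.Theory.
Local Open Scope ring_scope.

Section Jacobson.
Variable K : fieldType.

Definition jac := {poly {poly K}}.

Definition jmono (i j : nat) : jac := ('X^j)%:P * 'X^i.

Definition jmul (p q : jac) : jac :=
  \sum_(a < size p) \sum_(b < size p`_a) \sum_(c < size q) \sum_(d < size q`_c)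
    ((p`_a`_b * q`_c`_d)%:P)%:P * jmono (a + (c - b)) (d + (b - c)).

Definition jx : jac := jmono 0 1.
Definition jy : jac := jmono 1 0.

Definition jpolx (p : {poly K}) : jac := p%:P.

Definition left_ideal (H : jac -> Prop) : Prop :=
  [/\ H 0, (forall u v, H u -> H v -> H (u + v))
    & (forall r h, H h -> H (jmul r h))].

Definition two_sided_ideal (H : jac -> Prop) : Prop :=
  left_ideal H /\ (forall h r, H h -> H (jmul h r)).

Definition socle_I (z : jac) : Prop :=
  forall J, two_sided_ideal J -> J (1 - jmono 1 1) -> J z.

Definition jf (n : nat) : jac := jmono n.-1 n.-1 - jmono n n.

Definition S_upto (d : nat) (z : jac) : Prop :=
  exists r : nat -> jac, z = \sum_(n < d) jmul (r n) (jf n.+1).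

Definition simple_left_ideal (L : jac -> Prop) : Prop :=
  [/\ left_ideal L, (exists z, L z /\ z <> 0) &
      forall L', left_ideal L' -> (forall z, L' z -> L z) ->
        (forall z, L' z -> z = 0) \/ (forall z, L z -> L' z)].

(* a left ideal is semisimple (as a left R-module) iff it is the sum of its
   simple submodules *)
Definition semisimple_left_ideal (H : jac -> Prop) : Prop :=
  left_ideal H /\
  forall h, H h -> exists (n : nat) (L : nat -> jac -> Prop) (z : nat -> jac),
    (forall i, (i < n)%N ->
       [/\ simple_left_ideal (L i), (forall w, L i w -> H w) & L i (z i)]) /\
    h = \sum_(i < n) z i.

Definition minpoly_in (H : jac -> Prop) (p : {poly K}) : Prop :=
  [/\ p \is monic, H (jpolx p) &
      forall q : {poly K}, q != 0 -> H (jpolx q) -> (size p <= size q)%N].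

Definition sigma_decomp (H : jac -> Prop) (p : {poly K}) (Sig : jac -> Prop) :=
  [/\ left_ideal Sig, (forall z, Sig z -> S_upto (size p).-1 z),
      (forall z, H z <-> exists s t, Sig s /\ z = s + jmul t (jpolx p)) &
      (forall s t, Sig s -> s = jmul t (jpolx p) -> s = 0)].

End Jacobson.

(* R has the K-basis y^i x^j, in which x^b y^c collapses to x^(b-c) or
   y^(c-b). The elements e_ij = y^i (1 - yx) x^j are matrix units spanning the
   socle I, and for N past the y-degree of h the product x^N h is a polynomial
   in x. If H contains no nonzero polynomial in x, these polynomials x^N h all
   vanish, which forces h = sum_ij a_ij e_ij; then h = sum_i e_ii h with each
   e_ii h in a simple left ideal R e_0i h, so H is semisimple. Otherwise let
   p be the monic generator of the ideal H cap K[x] of K[x]. Dividing the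
   polynomials x^i h by p, the quotients assemble into t with h - t p a
   combination of e_ij with j < deg p, i.e. an element of S_1 + ... + S_deg p,
   and such an element is a left multiple of p only if it is 0, by comparing
   x-degrees row by row. Hence H = Sigma(H) (+) R p with
   Sigma(H) = H cap (S_1 + ... + S_deg p). *)
From HB Require Import structures.
From mathcomp Require Import all_boot all_order all_algebra.
From mathcomp Require Import zify ring.
From Stdlib Require Import Classical.
Set Implicit Arguments. Unset Strict Implicit. Unset Printing Implicit Defensive.
Import Order.TTheory GRing.Theory Num.Theory.
Local Open Scope ring_scope.

Lemma sum_ord_widen0 (V : zmodType) n m (F : nat -> V) : (n <= m)%N ->
  (forall i, (n <= i)%N -> F i = 0) -> \sum_(i < n) F i = \sum_(i < m) F i.
Proof.
move=> nm F0; rewrite (big_ord_widen m F nm) big_mkcond /=.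
by apply: eq_bigr => i _; case: ltnP => // /F0.
Qed.

Lemma sum_ord_if_eq (V : zmodType) n a (G : V) : (a < n)%N ->
  \sum_(i < n) (if nat_of_ord i == a then G else 0) = G.
Proof. by move=> ha; rewrite -big_mkcond big_ord1_eq ha. Qed.

Lemma size_lt_mul_eq0 (R : idomainType) (p b : {poly R}) :
  (size (b * p)%R < size p)%N -> b * p = 0.
Proof.
case: (eqVneq b 0) => [->|b0]; first by rewrite mul0r.
case: (eqVneq p 0) => [->|p0]; first by rewrite mulr0.
by rewrite size_mul //; have := size_poly_gt0 b; rewrite b0; lia.
Qed.

Section Jacobson.
Variable K : fieldType.
Local Notation jac := (jac K).
Local Notation mono := (jmono K).
Implicit Types (p q r z w h t s A : jac).

Definition jscale (c : K) z : jac := c%:P%:P * z.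

Lemma jscale0l z : jscale 0 z = 0. Proof. by rewrite /jscale !polyC0 mul0r. Qed.
Lemma jscale0r c : jscale c 0 = 0. Proof. by rewrite /jscale mulr0. Qed.
Lemma jscale1 z : jscale 1 z = z. Proof. by rewrite /jscale !polyC1 mul1r. Qed.
Lemma jscaleDr c z w : jscale c (z + w) = jscale c z + jscale c w.
Proof. by rewrite /jscale mulrDr. Qed.
Lemma jscaleDl c d z : jscale (c + d) z = jscale c z + jscale d z.
Proof. by rewrite /jscale !polyCD mulrDl. Qed.
Lemma jscaleNl c z : jscale (- c) z = - jscale c z.
Proof. by rewrite /jscale !polyCN mulNr. Qed.
Lemma jscaleA c d z : jscale c (jscale d z) = jscale (c * d) z.
Proof. by rewrite /jscale mulrA !polyCM. Qed.
Lemma jscaleN1 z : jscale (-1) z = - z.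
Proof. by rewrite jscaleNl jscale1. Qed.
Lemma jscale_sum c I (r : seq I) (P : pred I) (F : I -> jac) :
  jscale c (\sum_(i <- r | P i) F i) = \sum_(i <- r | P i) jscale c (F i).
Proof. by rewrite /jscale mulr_sumr. Qed.
Lemma coef_jscale c z a b : (jscale c z)`_a`_b = c * z`_a`_b.
Proof. by rewrite /jscale !coefCM. Qed.

Lemma coef_mono i j a b : (mono i j)`_a`_b = ((a == i) && (b == j))%:R.
Proof.
rewrite /jmono coefCM coefXn mulr_natr coefMn coefXn.
by case: (a == i); case: (b == j); rewrite /= ?mulr1n ?mulr0n ?mulr1 ?mulr0.
Qed.

Lemma jmono00 : mono 0 0 = 1.
Proof. by rewrite /jmono !expr0 mulr1. Qed.

Definition jcomb z (F : nat -> nat -> jac) : jac :=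
  \sum_(a < size z) \sum_(b < size (z`_a)%R) jscale z`_a`_b (F a b).

Definition jbound z : nat := (size z + \sum_(a < size z) size (z`_a)%R)%N.

Lemma size_le_jbound z : (size z <= jbound z)%N. Proof. exact: leq_addr. Qed.

Lemma size_coef_le_jbound z a : (size (z`_a)%R <= jbound z)%N.
Proof.
case: (ltnP a (size z)) => ha; last by rewrite nth_default // size_poly0.
by apply: leq_trans (leq_addl _ _); rewrite (bigD1 (Ordinal ha)) //= leq_addr.
Qed.

Lemma jcomb_widen z F N : (jbound z <= N)%N ->
  jcomb z F = \sum_(a < N) \sum_(b < N) jscale z`_a`_b (F a b).
Proof.
move=> hN; rewrite /jcomb.
transitivity (\sum_(a < size z) \sum_(b < N) jscale z`_a`_b (F a b)).
  apply: eq_bigr => a _; apply: (sum_ord_widen0 (F := fun b => jscale z`_a`_b (F a b))).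
    exact: leq_trans (size_coef_le_jbound _ _) hN.
  by move=> i hi; rewrite nth_default // jscale0l.
apply: (sum_ord_widen0 (F := fun a => \sum_(b < N) jscale z`_a`_b (F a b))).
  exact: leq_trans (size_le_jbound _) hN.
by move=> i hi; apply: big1 => b _; rewrite (nth_default _ hi) coef0 jscale0l.
Qed.

Lemma eq_jcomb z F G :
  (forall a b, (a < size z)%N -> (b < size (z`_a)%R)%N -> F a b = G a b) ->
  jcomb z F = jcomb z G.
Proof. by move=> eFG; apply: eq_bigr => a _; apply: eq_bigr => b _; rewrite eFG. Qed.

Lemma eq_jcomb_coef z F G : (forall a b, z`_a`_b != 0 -> F a b = G a b) ->
  jcomb z F = jcomb z G.
Proof.
move=> eFG; apply: eq_bigr => a _; apply: eq_bigr => b _.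
by case: (eqVneq z`_a`_b 0) => [->|/eFG ->]; rewrite ?jscale0l.
Qed.

Lemma jcomb0l F : jcomb 0 F = 0. Proof. by rewrite /jcomb size_poly0 big_ord0. Qed.

Lemma jcombDl z w F : jcomb (z + w) F = jcomb z F + jcomb w F.
Proof.
set N := (jbound z + jbound w + jbound (z + w)%R)%N.
rewrite (@jcomb_widen z F N) 1?(@jcomb_widen w F N) 1?(@jcomb_widen (z + w) F N);
  try by rewrite /N; lia.
rewrite -big_split; apply: eq_bigr => a _; rewrite -big_split; apply: eq_bigr => b _.
by rewrite !coefD jscaleDl.
Qed.

Lemma jcombZl c z F : jcomb (jscale c z) F = jscale c (jcomb z F).
Proof.
set N := (jbound z + jbound (jscale c z))%N.
rewrite (@jcomb_widen (jscale c z) F N) 1?(@jcomb_widen z F N) ?leq_addl ?leq_addr //.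
rewrite jscale_sum; apply: eq_bigr => a _; rewrite jscale_sum; apply: eq_bigr => b _.
by rewrite coef_jscale jscaleA.
Qed.

Lemma jcomb0r z : jcomb z (fun _ _ => 0) = 0.
Proof. by rewrite /jcomb big1 // => a _; rewrite big1 // => b _; rewrite jscale0r. Qed.

Lemma jcombDr z F G : jcomb z (fun a b => F a b + G a b) = jcomb z F + jcomb z G.
Proof.
rewrite /jcomb -big_split; apply: eq_bigr => a _; rewrite -big_split.
by apply: eq_bigr => b _; rewrite jscaleDr.
Qed.

Lemma jcombZr c z F : jcomb z (fun a b => jscale c (F a b)) = jscale c (jcomb z F).
Proof.
rewrite /jcomb jscale_sum; apply: eq_bigr => a _; rewrite jscale_sum.
by apply: eq_bigr => b _; rewrite !jscaleA mulrC.
Qed.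

Lemma jcomb_sumr z n (F : nat -> nat -> nat -> jac) :
  jcomb z (fun a b => \sum_(i < n) F i a b) = \sum_(i < n) jcomb z (F i).
Proof.
rewrite /jcomb exchange_big; apply: eq_bigr => a _.
by rewrite exchange_big; apply: eq_bigr => b _; apply: jscale_sum.
Qed.

Lemma jcomb_additive (f : jac -> jac) z F :
  {morph f : u v / u + v} -> (forall c u, f (jscale c u) = jscale c (f u)) ->
  f 0 = 0 -> f (jcomb z F) = jcomb z (fun a b => f (F a b)).
Proof.
move=> fD fZ f0; rewrite /jcomb (big_morph f fD f0); apply: eq_bigr => a _.
by rewrite (big_morph f fD f0); apply: eq_bigr => b _.
Qed.

Lemma jcomb_mulr z F w : jcomb z F * w = jcomb z (fun a b => F a b * w).
Proof.
apply: (jcomb_additive (f := fun u => u * w)) => [u v|c u|]; first exact: mulrDl.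
  by rewrite /jscale mulrA.
exact: mul0r.
Qed.

Lemma jcomb_delta z i j G :
  jcomb z (fun a b => if (a == i) && (b == j) then G else 0) = jscale z`_i`_j G.
Proof.
set N := (jbound z + i.+1 + j.+1)%N.
rewrite (@jcomb_widen _ _ N); last by rewrite /N -addnA leq_addr.
rewrite -(@sum_ord_if_eq _ N i (jscale z`_i`_j G)); last by rewrite /N; lia.
apply: eq_bigr => a _; case: eqP => [->|_]; last first.
  by apply: big1 => b _; rewrite /= jscale0r.
rewrite -(@sum_ord_if_eq _ N j (jscale z`_i`_j G)); last by rewrite /N; lia.
by apply: eq_bigr => b _ /=; case: eqP => [->|]; rewrite ?jscale0r.
Qed.

Lemma jcomb_mono i j F : jcomb (mono i j) F = F i j.
Proof.
have -> : F i j = jscale (mono i j)`_i`_j (F i j) by rewrite coef_mono !eqxx jscale1.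
rewrite -jcomb_delta; apply: eq_jcomb_coef => a b; rewrite coef_mono.
by case: ifP => [/andP[/eqP-> /eqP->] //|_]; rewrite eqxx.
Qed.

Lemma jcomb_monos z : jcomb z mono = z.
Proof.
rewrite -[RHS]coefK poly_def; apply: eq_bigr => a _.
rewrite -[z`_a in RHS]coefK poly_def -mul_polyC rmorph_sum mulr_suml.
by apply: eq_bigr => b _; rewrite /jscale /jmono mulrA -polyCM -mul_polyC.
Qed.

Lemma jmulE p q :
  jmul p q = jcomb p (fun a b => jcomb q (fun c d => mono (a + (c - b)) (d + (b - c)))).
Proof.
rewrite /jmul /jcomb; apply: eq_bigr => a _; apply: eq_bigr => b _.
rewrite jscale_sum; apply: eq_bigr => c _; rewrite jscale_sum; apply: eq_bigr => d _.
by rewrite jscaleA.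
Qed.

Lemma jmul_mono a b c d : jmul (mono a b) (mono c d) = mono (a + (c - b)) (d + (b - c)).
Proof. by rewrite jmulE !jcomb_mono. Qed.

Lemma jmul0l q : jmul 0 q = 0. Proof. by rewrite jmulE jcomb0l. Qed.
Lemma jmulDl p p' q : jmul (p + p') q = jmul p q + jmul p' q.
Proof. by rewrite !jmulE jcombDl. Qed.
Lemma jmulZl c p q : jmul (jscale c p) q = jscale c (jmul p q).
Proof. by rewrite !jmulE jcombZl. Qed.

Lemma jmul0r p : jmul p 0 = 0.
Proof. by rewrite jmulE -[RHS](jcomb0r p); apply: eq_jcomb => a b _ _; apply: jcomb0l. Qed.
Lemma jmulDr p q q' : jmul p (q + q') = jmul p q + jmul p q'.
Proof. by rewrite !jmulE -jcombDr; apply: eq_jcomb => a b _ _; apply: jcombDl. Qed.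
Lemma jmulZr c p q : jmul p (jscale c q) = jscale c (jmul p q).
Proof. by rewrite !jmulE -jcombZr; apply: eq_jcomb => a b _ _; apply: jcombZl. Qed.

Lemma jmulNl p q : jmul (- p) q = - jmul p q.
Proof. by rewrite -!jscaleN1 jmulZl. Qed.
Lemma jmulNr p q : jmul p (- q) = - jmul p q.
Proof. by rewrite -!jscaleN1 jmulZr. Qed.
Lemma jmulBl p p' q : jmul (p - p') q = jmul p q - jmul p' q.
Proof. by rewrite jmulDl jmulNl. Qed.
Lemma jmulBr p q q' : jmul p (q - q') = jmul p q - jmul p q'.
Proof. by rewrite jmulDr jmulNr. Qed.

Lemma jmul_sumr I (r : seq I) (P : pred I) (F : I -> jac) p :
  jmul p (\sum_(i <- r | P i) F i) = \sum_(i <- r | P i) jmul p (F i).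
Proof. exact: (big_morph (jmul p) (jmulDr p) (jmul0r p)). Qed.

Lemma jcomb_jmull z F q :
  jmul (jcomb z F) q = jcomb z (fun a b => jmul (F a b) q).
Proof.
rewrite (jcomb_additive (f := fun u => jmul u q)) // => [u v|c u|];
  [exact: jmulDl | exact: jmulZl | exact: jmul0l].
Qed.

Lemma jcomb_jmulr z F p :
  jmul p (jcomb z F) = jcomb z (fun a b => jmul p (F a b)).
Proof.
rewrite (jcomb_additive (f := fun u => jmul p u)) // => [u v|c u|];
  [exact: jmulDr | exact: jmulZr | exact: jmul0r].
Qed.

Lemma jmul_jcombl p q : jmul p q = jcomb p (fun a b => jmul (mono a b) q).
Proof. by rewrite -{1}(jcomb_monos p) jcomb_jmull. Qed.

Lemma jmul_jcombr p q : jmul p q = jcomb q (fun c d => jmul p (mono c d)).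
Proof. by rewrite -{1}(jcomb_monos q) jcomb_jmulr. Qed.

Lemma jmul1l z : jmul 1 z = z.
Proof.
rewrite -jmono00 jmulE jcomb_mono -[RHS]jcomb_monos; apply: eq_jcomb => a b _ _.
by congr (mono _ _); lia.
Qed.

Lemma jmulA p q r : jmul (jmul p q) r = jmul p (jmul q r).
Proof.
rewrite -[p]jcomb_monos -[q]jcomb_monos -[r]jcomb_monos !jcomb_jmull.
apply: eq_jcomb => a b _ _.
rewrite [jmul (mono a b) (jcomb q _)]jcomb_jmulr jcomb_jmull [RHS]jcomb_jmulr.
apply: eq_jcomb => c d _ _; rewrite !jcomb_jmulr.
apply: eq_jcomb => e f _ _; rewrite !jmul_mono.
by congr (mono _ _); lia.
Qed.

Lemma jmul_jscale1 c z : jmul (jscale c 1) z = jscale c z.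
Proof. by rewrite jmulZl jmul1l. Qed.

Lemma jmul_jpolx t (p : {poly K}) : jmul t (jpolx p) = t * p%:P.
Proof.
rewrite jmul_jcombl -{2}(jcomb_monos t) jcomb_mulr; apply: eq_jcomb => a b _ _.
rewrite jmul_jcombr /jpolx -[X in _ = _ * X](jcomb_monos p%:P) mulrC jcomb_mulr.
apply: eq_jcomb => c d hc _.
have c0 : c = 0%N by move: (leq_trans hc (size_polyC_leq1 p)); rewrite ltnS leqn0 => /eqP.
by rewrite c0 jmul_mono /jmono subn0 sub0n addn0 expr0 mulr1 mulrA -polyCM -exprD.
Qed.

Lemma jpolxM (a b : {poly K}) : jmul (jpolx a) (jpolx b) = jpolx (a * b).
Proof. by rewrite jmul_jpolx /jpolx polyCM. Qed.

Definition jidem : jac := 1 - 'X%:P * 'X.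

(* the matrix unit e_ij = y^i (1 - yx) x^j *)
Definition jeu i j : jac := mono i j * jidem.

Lemma jeuE i j : jeu i j = mono i j - mono i.+1 j.+1.
Proof.
rewrite /jeu /jidem /jmono mulrBr mulr1; congr (_ - _).
by rewrite !exprS mulrCA -!mulrA [_ * 'X]mulrC polyCM !mulrA.
Qed.

Lemma jf_jeu n : jf K n.+1 = jeu n n.
Proof. by rewrite jeuE /jf. Qed.

Lemma jmul_mono_jeu a b k l :
  jmul (mono a b) (jeu k l) = if (b <= k)%N then jeu (a + (k - b)) l else 0.
Proof.
rewrite !jeuE jmulBr !jmul_mono; case: leqP => hb.
  have -> : (a + (k.+1 - b) = (a + (k - b)).+1)%N by lia.
  by congr (mono _ _ - mono _ _); lia.
have [-> ->] : (k - b = 0)%N /\ (k.+1 - b = 0)%N by lia.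
have -> : (l.+1 + (b - k.+1) = l + (b - k))%N by lia.
by rewrite subrr.
Qed.

Lemma jmul_jeu i j k l : jmul (jeu i j) (jeu k l) = if j == k then jeu i l else 0.
Proof.
rewrite {1}jeuE jmulBl !jmul_mono_jeu; case: (ltngtP j k) => jk.
- by rewrite [X in _ - X](_ : _ = jeu (i + (k - j)) l) ?subrr //; congr jeu; lia.
- by rewrite subrr.
- by rewrite jk subr0 subnn addn0.
Qed.

Lemma jmul_jeu00 s :
  jmul s (jeu 0 0) = jcomb s (fun a b => if b == 0%N then jeu a 0 else 0).
Proof.
rewrite jmul_jcombl; apply: eq_jcomb => a b _ _; rewrite jmul_mono_jeu leqn0.
by case: eqP => // ->; rewrite subn0 addn0.
Qed.

Lemma jeu_gen a b : jeu a b = jmul (mono a 0) (jmul (1 - mono 1 1) (mono 0 b)).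
Proof.
rewrite jmulBl jmul1l jmul_mono jmulBr !jmul_mono jeuE.
by congr (_ - _); congr (mono _ _); lia.
Qed.

Lemma mul_jidemE A : A * jidem = jcomb A jeu.
Proof. by rewrite -{1}(jcomb_monos A) jcomb_mulr. Qed.

Definition xbounded d z := forall i, (size (z`_i)%R <= d)%N.

Lemma xbounded0 d : xbounded d 0. Proof. by move=> i; rewrite coef0 size_poly0. Qed.

Lemma xboundedD d z w : xbounded d z -> xbounded d w -> xbounded d (z + w).
Proof.
move=> hz hw i; rewrite coefD; apply: leq_trans (size_polyD _ _) _.
by rewrite geq_max hz hw.
Qed.

Lemma xboundedZ d c z : xbounded d z -> xbounded d (jscale c z).
Proof.
move=> hz i; rewrite /jscale coefCM; apply: leq_trans (size_polyMleq _ _) _.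
by apply: leq_trans (hz i); rewrite size_polyC; case: (c != 0); lia.
Qed.

Lemma xbounded_mono d i j : (j < d)%N -> xbounded d (mono i j).
Proof.
move=> hj a; rewrite /jmono coefCM coefXn mulr_natr.
by case: (a == i); rewrite ?mulr1n ?mulr0n ?size_poly0 // size_polyXn.
Qed.

Lemma xbounded_sum d I (r : seq I) (P : pred I) (F : I -> jac) :
  (forall i, P i -> xbounded d (F i)) -> xbounded d (\sum_(i <- r | P i) F i).
Proof.
move=> hF; elim/big_rec: _ => [|i u Pi hu]; first exact: xbounded0.
by apply: xboundedD => //; apply: hF.
Qed.

Lemma xbounded_jcomb d z F : (forall a b, xbounded d (F a b)) -> xbounded d (jcomb z F).
Proof.
by move=> hF; apply: xbounded_sum => a _; apply: xbounded_sum => b _; apply/xboundedZ/hF.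
Qed.

Lemma S_uptoP d z : S_upto d z <-> exists A, xbounded d A /\ z = A * jidem.
Proof.
split=> [[r ->]|[A [hA ->]]].
  exists (\sum_(n < d) jcomb (r n) (fun a b => if (b <= n)%N then mono (a + (n - b)) n else 0)).
  split.
    apply: xbounded_sum => n _; apply: xbounded_jcomb => a b.
    by case: ifP => _; [apply: xbounded_mono | apply: xbounded0].
  rewrite mulr_suml; apply: eq_bigr => n _; rewrite jf_jeu jmul_jcombl jcomb_mulr.
  by apply: eq_jcomb => a b _ _; rewrite jmul_mono_jeu; case: ifP; rewrite ?mul0r.
exists (fun n => jcomb A (fun a b => if b == n then mono a n else 0)).
transitivity (\sum_(n < d) jcomb A (fun a b => if b == n then jeu a n else 0)).
  rewrite mul_jidemE -(jcomb_sumr A d (fun n a b => if b == n then jeu a n else 0)).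
  apply: eq_jcomb => a b _ hb.
  rewrite -(@sum_ord_if_eq _ d b (jeu a b)); last exact: leq_trans hb (hA a).
  by apply: eq_bigr => n _; rewrite eq_sym; case: eqP => // ->.
apply: eq_bigr => n _; rewrite jf_jeu jcomb_jmull; apply: eq_jcomb => a b _ _.
by case: ifP => _; rewrite ?jmul0l // jmul_mono_jeu leqnn subnn addn0.
Qed.

Lemma coef_mul_jidem A i :
  (A * jidem)`_i = A`_i - (if i is i'.+1 then A`_i' * 'X else 0).
Proof. by rewrite /jidem mulrBr mulr1 mulrA coefB coefMX coefMC; case: i. Qed.

Lemma xbounded_mul_jidem_Rp_eq0 (p : {poly K}) A t :
  xbounded (size p).-1 A -> A * jidem = t * p%:P -> A = 0.
Proof.
move=> hA e.
have small (a b : {poly K}) : (size a <= (size p).-1)%N -> a = b * p -> a = 0.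
  move=> ha ea; case: (eqVneq p 0) => [p0|]; first by rewrite ea p0 mulr0.
  rewrite -size_poly_gt0 => p0.
  by rewrite ea; apply: size_lt_mul_eq0; rewrite -ea (leq_ltn_trans ha) // ltn_predL.
have row_eq0 i : A`_i = 0.
  elim: i => [|i IH].
    by have /polyP/(_ 0%N) := e; rewrite coef_mul_jidem coefMC subr0; apply/small/hA.
  by have /polyP/(_ i.+1) := e; rewrite coef_mul_jidem coefMC IH mul0r subr0; apply/small/hA.
by apply/polyP => i; rewrite row_eq0 coef0.
Qed.

Lemma S_upto_Rp_eq0 (p : {poly K}) s t :
  S_upto (size p).-1 s -> s = jmul t (jpolx p) -> s = 0.
Proof.
case/S_uptoP=> A [hA ->] e.
by rewrite (@xbounded_mul_jidem_Rp_eq0 p A t hA) ?mul0r // e jmul_jpolx.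
Qed.

(* the polynomial in x equal to x^i h, once i + 1 exceeds the y-degree of h *)
Fixpoint xpow_poly h (i : nat) : {poly K} :=
  if i is i'.+1 then h`_i'.+1 + 'X * xpow_poly h i' else h`_0.

Lemma xpow_polyE h i : xpow_poly h i = \sum_(k < i.+1) h`_k * 'X^(i - k).
Proof.
elim: i => [|i IH] /=; first by rewrite big_ord1 subnn expr0 mulr1.
rewrite big_ord_recr /= subnn expr0 mulr1 addrC IH mulr_sumr; congr (_ + _).
apply: eq_bigr => k _; rewrite mulrCA -exprS; congr (_ * 'X^_).
by have := ltn_ord k; lia.
Qed.

Lemma jcomb_polyC h (G : nat -> nat -> {poly K}) :
  jcomb h (fun c d => (G c d)%:P) =
  (\sum_(c < size h) \sum_(d < size (h`_c)%R) h`_c`_d *: G c d)%:P.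
Proof.
rewrite /jcomb rmorph_sum; apply: eq_bigr => c _; rewrite rmorph_sum.
by apply: eq_bigr => d _; rewrite /jscale -polyCM mul_polyC.
Qed.

Lemma jmul_xpow h N : (size h <= N.+1)%N -> jmul (mono 0 N) h = jpolx (xpow_poly h N).
Proof.
move=> hN; rewrite jmul_jcombr.
rewrite (eq_jcomb (G := fun c d => ('X^d * 'X^(N - c))%:P)); last first.
  move=> c d hc _; rewrite jmul_mono /jmono add0n.
  have -> : (c - N = 0)%N by lia.
  by rewrite expr0 mulr1 exprD.
rewrite jcomb_polyC /jpolx xpow_polyE; congr (_%:P).
transitivity (\sum_(c < size h) h`_c * 'X^(N - c)).
  apply: eq_bigr => c _; rewrite -[h`_c in RHS]coefK poly_def mulr_suml.
  by apply: eq_bigr => d _; rewrite scalerAl.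
apply: (sum_ord_widen0 (F := fun c => h`_c * 'X^(N - c))) => // i hi.
by rewrite nth_default // mul0r.
Qed.

Definition xshift (U : nat -> {poly K}) i : {poly K} :=
  if i is i'.+1 then 'X * U i' else 0.

(* Writing x^i h = U_i p + A_i, the recurrence x^(i+1) h = h_(i+1) + x (x^i h)
   gives h_i = (U_i - x U_(i-1)) p + (A_i - x A_(i-1)) for the coefficients
   h_i of y^i, i.e. h = T p + A (1 - yx). *)
Lemma division_identity h (p : {poly K}) (U A : nat -> {poly K}) :
  (forall i, xpow_poly h i = U i * p + A i) ->
  (forall i, (size h <= i.+1)%N -> A i = 0) ->
  (forall i, (size h <= i)%N -> U i = xshift U i) ->
  h - (\poly_(i < size h) (U i - xshift U i)) * p%:P = (\poly_(i < size h) A i) * jidem.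
Proof.
move=> hP hA hU.
have Ai i : (\poly_(i < size h) A i)`_i = A i.
  by rewrite coef_poly; case: ltnP => // hi; rewrite hA //; apply: leqW.
have Ti i : (\poly_(i < size h) (U i - xshift U i))`_i = U i - xshift U i.
  by rewrite coef_poly; case: ltnP => // hi; rewrite hU // subrr.
apply/polyP => i; rewrite coef_mul_jidem coefB coefMC Ti Ai.
case: i => [|i] /=.
  by rewrite subr0 /xshift subr0 -[h`_0]/(xpow_poly h 0) hP addrC addKr.
have := hP i.+1; rewrite /= hP Ai => e.
have -> : h`_i.+1 = U i.+1 * p + A i.+1 - 'X * (U i * p + A i) by rewrite -e addrK.
by rewrite /xshift; ring.
Qed.

Lemma S_upto_left_ideal d : left_ideal (@S_upto K d).
Proof.
split=> [|z w [r1 ->] [r2 ->]|t z [r ->]].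
- by exists (fun=> 0); rewrite big1 // => n _; rewrite jmul0l.
- exists (fun n => r1 n + r2 n).
  by rewrite -big_split; apply: eq_bigr => n _; rewrite jmulDl.
- exists (fun n => jmul t (r n)).
  by rewrite jmul_sumr; apply: eq_bigr => n _; rewrite jmulA.
Qed.

Section LeftIdeal.
Variable H : jac -> Prop.
Hypothesis idH : left_ideal H.

Lemma lideal0 : H 0. Proof. by case: idH. Qed.
Lemma lidealD z w : H z -> H w -> H (z + w). Proof. by case: idH => _ HD _; apply: HD. Qed.
Lemma lidealM r z : H z -> H (jmul r z). Proof. by case: idH => _ _ HM; apply: HM. Qed.
Lemma lidealN z : H z -> H (- z).
Proof. by move=> Hz; rewrite -[z]jmul1l -jmulNl; apply: lidealM. Qed.
Lemma lidealB z w : H z -> H w -> H (z - w).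
Proof. by move=> Hz Hw; apply/lidealD/lidealN. Qed.
Lemma lidealZ c z : H z -> H (jscale c z).
Proof. by move=> Hz; rewrite -jmul_jscale1; apply: lidealM. Qed.

Lemma lideal_xpow_poly h i : H h -> (size h <= i.+1)%N -> H (jpolx (xpow_poly h i)).
Proof. by move=> Hh hi; rewrite -jmul_xpow //; apply: lidealM. Qed.

Lemma minpoly_in_dvd (p q : {poly K}) : minpoly_in H p -> H (jpolx q) -> p %| q.
Proof.
case=> /monic_neq0 p0 Hp minp Hq; apply/modp_eq0P.
have Hr : H (jpolx (q %% p)).
  have -> : jpolx (q %% p) = jpolx q - jmul (jpolx (q %/ p)) (jpolx p).
    by rewrite jpolxM {2}(divp_eq q p) /jpolx polyCD addrC addKr.
  by apply/lidealB/lidealM.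
apply/eqP; apply: contraT => r0.
by have := minp _ r0 Hr; rewrite leqNgt ltn_modp p0.
Qed.

Lemma minpoly_in_unique (p p' : {poly K}) : minpoly_in H p -> minpoly_in H p' -> p' = p.
Proof.
move=> minp minp'; have [mp Hp _] := minp; have [mp' Hp' _] := minp'.
apply/eqP; rewrite -eqp_monic //; apply/andP.
by split; [apply: minpoly_in_dvd Hp | apply: minpoly_in_dvd Hp'].
Qed.

Lemma minpoly_in_exists (q : {poly K}) :
  q != 0 -> H (jpolx q) -> exists p : {poly K}, minpoly_in H p.
Proof.
elim: {q}(size q) {-2}q (leqnn (size q)) => [|n IH] q.
  by rewrite leqn0 size_poly_eq0 => /eqP ->; rewrite eqxx.
move=> szq q0 Hq.
case: (classic (exists q' : {poly K}, [/\ q' != 0, H (jpolx q') & (size q' < size q)%N])).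
  by case=> q' [q'0 Hq' ltq']; apply: (IH q') => //; lia.
move=> no_smaller; have lq0 : lead_coef q != 0 by rewrite lead_coef_eq0.
exists ((lead_coef q)^-1 *: q); split.
- by rewrite monicE lead_coefZ mulVf.
- by rewrite /jpolx -mul_polyC polyCM; apply: lidealZ.
- move=> q' q'0 Hq'; rewrite size_scale ?invr_eq0 // leqNgt.
  by apply/negP => ltq'; apply: no_smaller; exists q'.
Qed.

Lemma minpoly_in_division (p : {poly K}) h : minpoly_in H p -> H h ->
  exists t, S_upto (size p).-1 (h - jmul t (jpolx p)).
Proof.
move=> minp Hh; have p0 : p != 0 by case: minp => /monic_neq0.
pose U i := xpow_poly h i %/ p; pose A i := xpow_poly h i %% p.
have A0 i : (size h <= i.+1)%N -> A i = 0.
  by move=> hi; apply/modp_eq0P/(minpoly_in_dvd minp)/lideal_xpow_poly.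
have Ushift i : (size h <= i)%N -> U i = xshift U i.
  case: i => [|i] hi /=.
    by move: hi; rewrite leqn0 size_poly_eq0 /U => /eqP ->; rewrite /= coef0 div0p.
  rewrite /U /xshift /= nth_default // add0r.
  have -> : xpow_poly h i = xpow_poly h i %/ p * p.
    by rewrite {1}(divp_eq (xpow_poly h i) p) -/(A i) A0 ?addr0 //; apply: ltnW.
  by rewrite mulrA !mulpK.
exists (\poly_(i < size h) (U i - xshift U i)).
rewrite jmul_jpolx (division_identity (fun i => divp_eq _ _) A0 Ushift).
apply/S_uptoP; eexists; split; last reflexivity.
move=> i; rewrite coef_poly; case: ifP => _; last by rewrite size_poly0.
have ltA : (size (A i) < size p)%N by rewrite ltn_modp.
by rewrite -ltnS (ltn_predK ltA).
Qed.

Lemma sigma_decomp_minpoly (p : {poly K}) : minpoly_in H p ->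
  sigma_decomp H p (fun z => H z /\ S_upto (size p).-1 z).
Proof.
move=> minp; have [_ Hp _] := minp; have [S0 SD SM] := S_upto_left_ideal (size p).-1.
split.
- split=> [|u v [Hu Su] [Hv Sv]|r z [Hz Sz]].
  + by split; [apply: lideal0 | apply: S0].
  + by split; [apply: lidealD | apply: SD].
  + by split; [apply: lidealM | apply: SM].
- by move=> z [].
- move=> z; split=> [Hz|[s [t [[Hs _] ->]]]]; last by apply/lidealD/lidealM.
  have [t St] := minpoly_in_division minp Hz.
  exists (z - jmul t (jpolx p)), t; split; last by rewrite subrK.
  by split=> //; apply/lidealB/lidealM.
- by move=> s t [_ Ss]; apply: S_upto_Rp_eq0.
Qed.

(* the division identity for p = 1, with zero quotients *)
Lemma mul_jidem_of_no_xpoly h : (forall q : {poly K}, H (jpolx q) -> q = 0) -> H h ->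
  exists A, h = A * jidem.
Proof.
move=> no_xpoly Hh; exists (\poly_(i < size h) xpow_poly h i).
have T0 : \poly_(i < size h) (0 - xshift (fun=> 0) i) = 0 :> {poly {poly K}}.
  by apply/polyP => -[|i]; rewrite coef_poly coef0 /xshift ?mulr0 subr0; case: ifP.
rewrite -(@division_identity h 1 (fun=> 0) (xpow_poly h)) ?T0 ?mul0r ?subr0 // => i.
- by rewrite add0r.
- by move=> hi; apply/no_xpoly/lideal_xpow_poly.
- by case: i => //= i _; rewrite /xshift mulr0.
Qed.

End LeftIdeal.

Lemma sigma_decompE H (p : {poly K}) Sig : sigma_decomp H p Sig ->
  forall z, Sig z <-> H z /\ S_upto (size p).-1 z.
Proof.
case=> _ SigS Hdec _ z; split=> [Sz|[Hz Sz]].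
  by split; [apply/Hdec; exists z, 0; rewrite jmul0l addr0 | apply: SigS].
have [s [t [Ss ez]]] := (Hdec z).1 Hz.
have St : S_upto (size p).-1 (jmul t (jpolx p)).
  have -> : jmul t (jpolx p) = z - s by rewrite ez addrC addKr.
  by apply: (lidealB (S_upto_left_ideal _)) => //; apply: SigS.
by rewrite ez (S_upto_Rp_eq0 St erefl) addr0.
Qed.

Lemma socle_I_mul_jidem A : socle_I (A * jidem).
Proof.
move=> J [idJ JR] J1; case: idJ => J0 JD JM.
rewrite mul_jidemE; apply: (big_ind J J0 JD) => a _; apply: (big_ind J J0 JD) => b _.
by rewrite -jmul_jscale1; apply: (JM); rewrite jeu_gen; apply: (JM); apply: JR.
Qed.

Lemma sum_jeu_diag A N : (size A <= N)%N ->
  \sum_(i < N) jmul (jeu i i) (A * jidem) = A * jidem.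
Proof.
move=> hN.
have e i : jmul (jeu i i) (A * jidem) = jcomb A (fun a b => if i == a then jeu a b else 0).
  rewrite mul_jidemE jcomb_jmulr; apply: eq_jcomb => a b _ _.
  by rewrite jmul_jeu; case: eqP => [->|].
rewrite (eq_bigr (fun i : 'I_N => jcomb A (fun a b => if nat_of_ord i == a then jeu a b else 0))) //.
rewrite -(jcomb_sumr A N (fun i a b => if i == a then jeu a b else 0)) mul_jidemE.
by apply: eq_jcomb => a b ha _; rewrite sum_ord_if_eq //; apply: leq_trans ha hN.
Qed.

Lemma jmul_jeu_jeu00 a s : jmul (jeu 0 a) (jmul s (jeu 0 0)) = jscale s`_a`_0 (jeu 0 0).
Proof.
rewrite jmul_jeu00 jcomb_jmulr -jcomb_delta; apply: eq_jcomb => a' b _ _.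
case: eqP => _; last by rewrite jmul0r andbF.
by rewrite jmul_jeu andbT eq_sym; case: eqP.
Qed.

Lemma jmul_jeu00_eq0 s : (forall a, s`_a`_0 = 0) -> jmul s (jeu 0 0) = 0.
Proof.
move=> s0; rewrite jmul_jeu00 -[RHS](jcomb0r s); apply: eq_jcomb_coef => a b.
by case: ifP => // /eqP ->; rewrite s0 eqxx.
Qed.

(* Every nonzero element of R w has a left multiple equal to w, since
   e_0a (s e_00) = s_a0 e_00. *)
Lemma simple_cyclic_left_ideal w : w != 0 -> jmul (jeu 0 0) w = w ->
  simple_left_ideal (fun v => exists s, v = jmul s w).
Proof.
move=> w0 ew; split.
- split=> [|u v [s1 ->] [s2 ->]|r h [s ->]].
  + by exists 0; rewrite jmul0l.
  + by exists (s1 + s2); rewrite jmulDl.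
  + by exists (jmul r s); rewrite jmulA.
- by exists w; split; [exists 1; rewrite jmul1l | apply/eqP].
move=> L' idL' subL'.
case: (classic (exists u, L' u /\ u != 0)) => [[u [L'u u0]]|no_u]; last first.
  by left=> z L'z; apply/eqP; apply: contraT => z0; case: no_u; exists z.
right; have [s eu] := subL' u L'u.
have {}eu : u = jmul (jmul s (jeu 0 0)) w by rewrite eu -{1}ew jmulA.
have [a sa0] : exists a, s`_a`_0 != 0.
  apply: NNPP => no_a; move/eqP: u0; apply.
  rewrite eu jmul_jeu00_eq0 ?jmul0l // => a.
  by apply/eqP; apply: contraT => sa0; case: no_a; exists a.
have L'w : L' w.
  have -> : w = jmul (jscale (s`_a`_0)^-1 (jeu 0 a)) u.
    by rewrite jmulZl eu -jmulA jmul_jeu_jeu00 jmulZl ew jscaleA mulVf ?jscale1.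
  exact: (lidealM idL').
by move=> z [s' ->]; apply: (lidealM idL').
Qed.

(* h = sum_i e_ii h and e_ii h = e_i0 (e_0i h) lies in the simple left ideal
   R (e_0i h) when e_0i h != 0. *)
Lemma semisimple_mul_jidem H (idH : left_ideal H) A : H (A * jidem) ->
  exists (n : nat) (L : nat -> jac -> Prop) (z : nat -> jac),
    (forall i, (i < n)%N ->
       [/\ simple_left_ideal (L i), (forall w, L i w -> H w) & L i (z i)]) /\
    A * jidem = \sum_(i < n) z i.
Proof.
set h := A * jidem => Hh.
pose w i := jmul (jeu 0 i) h.
pose L i v := exists s, v = jmul s (w i).
pose z i := jmul (jeu i 0) (w i).
have h_sum : h = \sum_(i < size A) z i.
  rewrite -[LHS](sum_jeu_diag (leqnn _)); apply: eq_bigr => i _.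
  by rewrite /z /w -jmulA jmul_jeu eqxx.
have ew i : jmul (jeu 0 0) (w i) = w i by rewrite /w -jmulA jmul_jeu eqxx.
have LH i v : L i v -> H v by move=> [s ->]; apply/(lidealM idH)/(lidealM idH).
case: (classic (exists i, (i < size A)%N /\ w i != 0)) => [[i0 [_ wi0]]|no_w].
  exists (size A), (fun i => if w i == 0 then L i0 else L i), z; split=> // i _.
  case: eqP => [wi|/eqP wi]; split; try exact: LH.
  - exact: simple_cyclic_left_ideal wi0 (ew i0).
  - by exists 0; rewrite /z wi jmul0r jmul0l.
  - exact: simple_cyclic_left_ideal wi (ew i).
  - by exists (jeu i 0).
exists 0%N, (fun _ _ => True), (fun _ => 0); split=> //.
rewrite big_ord0 h_sum big1 // => i _; rewrite /z.
case: (eqVneq (w i) 0) => [->|wi]; first by rewrite jmul0r.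
by case: no_w; exists i.
Qed.

End Jacobson.

Theorem theorem3 (K : fieldType) (H : jac K -> Prop) :
  left_ideal H ->
  (semisimple_left_ideal H /\ (forall z, H z -> socle_I z))
  \/
  (exists p : {poly K},
     [/\ minpoly_in H p,
         (forall p' : {poly K}, minpoly_in H p' -> p' = p) &
         exists Sig : jac K -> Prop,
           sigma_decomp H p Sig /\
           (forall Sig' : jac K -> Prop, sigma_decomp H p Sig' ->
              forall z, Sig' z <-> Sig z)]).
Proof.
move=> idH.
case: (classic (exists q : {poly K}, q != 0 /\ H (jpolx q))) => [[q [q0 Hq]]|xpoly0].
  right; have [p minp] := minpoly_in_exists idH q0 Hq.
  exists p; split=> //; first by move=> p'; apply: minpoly_in_unique.
  exists (fun z => H z /\ S_upto (size p).-1 z).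
  split; first exact: sigma_decomp_minpoly.
  by move=> Sig' dSig' z; rewrite (sigma_decompE dSig').
have no_xpoly q : H (jpolx q) -> q = 0.
  by move=> Hq; apply/eqP; apply: contraT => q0; case: xpoly0; exists q.
left; split; last by move=> z /(mul_jidem_of_no_xpoly idH no_xpoly) [A ->]; apply: socle_I_mul_jidem.
split=> // h Hh; have [A eA] := mul_jidem_of_no_xpoly idH no_xpoly Hh.
by rewrite eA; apply: (semisimple_mul_jidem idH); rewrite -eA.
Qed.
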